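(* For all integers $n\ge 3$ and real numbers $a\ge1$, $x\in(0,\pi)$, we have $S_{n,a}(x)\ge S_{n-2,a}(x)$.
   Context: For a real number $a$ and integers $0\le m$, the binomial coefficient is $\binom{m+a}{m}=\frac{(a+1)(a+2)\cdots(a+m)}{m!}$ (equal to $1$ when $m=0$). For an integer $n\ge1$ and real $a$, $S_{n,a}(x)=\sum_{j=1}^n\binom{n+a-j}{n-j}\sin(jx)$. *)

From Stdlib Require Import Reals Lra Lia Factorial.
Open Scope R_scope.

Fixpoint rising_prod (a : R) (m : nat) : R :=
  match m with
  | O => 1
  | S k => rising_prod a k * (a + INR (S k))
  end.

(* gbinom a m = binom(m+a, m) = (a+1)(a+2)...(a+m)/m!  (= 1 when m = 0). *)
Definition gbinom (a : R) (m : nat) : R := rising_prod a m / INR (fact m).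

Definition S_na (n : nat) (a x : R) : R :=
  sum_f 1 n (fun j => gbinom a (n - j) * sin (INR j * x)).

(** The difference [S_{n,a} - S_{n-2,a}] equals [2 sin x * K(x)] with
    [K(x) = 1/2 binom(n-1+a, n-1) + sum_{j=1}^{n-1} binom(n-1-j+a, n-1-j) cos(jx)].
    Since [(1-z)^{-a-1} = (1-z)^{-(a-2)-1} (1-z)^{-2}], the coefficients of [K] are
    the convolution of the coefficients [binom(t+a-2, t)] with [k+1], so [K] is a
    combination of Fejér kernels with coefficients [binom(t+a-2, t)]; these are
    nonnegative for [a >= 1], and Fejér kernels are nonnegative. *)

From Stdlib Require Import Reals Lra Lia Factorial.
Open Scope R_scope.

Lemma rising_prod_pred_succ (a : R) (k : nat) :
  rising_prod (a - 1) (S k) = a * rising_prod a k.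
Proof.
  induction k as [|k IHk]; [simpl; ring|].
  change (rising_prod (a - 1) (S k) * (a - 1 + INR (S (S k)))
          = a * (rising_prod a k * (a + INR (S k)))).
  rewrite IHk, (S_INR (S k)); ring.
Qed.

Lemma gbinom_0 (a : R) : gbinom a 0 = 1.
Proof. unfold gbinom; simpl; field. Qed.

Lemma gbinom_pascal (a : R) (k : nat) :
  gbinom a (S k) = gbinom a k + gbinom (a - 1) (S k).
Proof.
  unfold gbinom; rewrite rising_prod_pred_succ.
  change (rising_prod a (S k)) with (rising_prod a k * (a + INR (S k))).
  change (fact (S k)) with (S k * fact k)%nat; rewrite mult_INR.
  pose proof (INR_fact_neq_0 k).
  assert (INR (S k) <> 0) by (rewrite S_INR; pose proof (pos_INR k); lra).
  field; auto.
Qed.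

Lemma sum_gbinom_pred (a : R) (k : nat) :
  sum_f_R0 (gbinom (a - 1)) k = gbinom a k.
Proof.
  induction k as [|k IHk]; cbn [sum_f_R0].
  - rewrite !gbinom_0; ring.
  - rewrite IHk, (gbinom_pascal a k); ring.
Qed.

(* [k + 1 - t] is [binom(k - t + 1, k - t)]: this is the convolution
   [(1-z)^{-a-1} = (1-z)^{-(a-2)-1} (1-z)^{-2}]. *)
Lemma gbinom_conv_linear (a : R) (k : nat) :
  sum_f_R0 (fun t => gbinom (a - 2) t * (INR k + 1 - INR t)) k = gbinom a k.
Proof.
  replace (a - 2) with (a - 1 - 1) by ring.
  induction k as [|k IHk]; cbn [sum_f_R0].
  - rewrite !gbinom_0; simpl INR; ring.
  - rewrite (sum_eq _ (fun t => gbinom (a - 1 - 1) t * (INR k + 1 - INR t)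
                                + gbinom (a - 1 - 1) t))
      by (intros; rewrite S_INR; ring).
    rewrite sum_plus, IHk, sum_gbinom_pred, (gbinom_pascal a k),
      (gbinom_pascal (a - 1) k), <- (sum_gbinom_pred (a - 1) k), S_INR.
    ring.
Qed.

Lemma gbinom_nonneg (b : R) (t : nat) : 0 <= b + 1 -> 0 <= gbinom b t.
Proof.
  intros Hb; unfold gbinom; apply Rmult_le_pos.
  - induction t as [|t IHt]; cbn [rising_prod]; [lra|].
    apply Rmult_le_pos; [exact IHt|].
    rewrite S_INR; pose proof (pos_INR t); lra.
  - left; apply Rinv_0_lt_compat, lt_0_INR, lt_O_fact.
Qed.

Lemma sum_f_R0_triangle_swap (f : nat -> nat -> R) (m : nat) :
  sum_f_R0 (fun l => sum_f_R0 (f l) l) m =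
  sum_f_R0 (fun j => sum_f_R0 (fun t => f (m - t)%nat j) (m - j)) m.
Proof.
  induction m as [|m IHm]; [reflexivity|].
  cbn [sum_f_R0]; rewrite IHm, Nat.sub_diag; cbn [sum_f_R0]; rewrite Nat.sub_0_r.
  rewrite (sum_eq (fun j => sum_f_R0 (fun t => f (S m - t)%nat j) (S m - j))
                  (fun j => f (S m) j + sum_f_R0 (fun t => f (m - t)%nat j) (m - j))).
  - rewrite sum_plus; ring.
  - intros j Hj; replace (S m - j)%nat with (S (m - j)) by lia.
    rewrite decomp_sum by lia; reflexivity.
Qed.

Definition cos_weight (j : nat) : R := match j with O => / 2 | _ => 1 end.

Definition dirichlet (x : R) (l : nat) : R :=
  sum_f_R0 (fun j => cos_weight j * cos (INR j * x)) l.

Definition fejer (x : R) (l : nat) : R :=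
  sum_f_R0 (fun j => cos_weight j * (INR l + 1 - INR j) * cos (INR j * x)) l.

Lemma dirichlet_closed_form (x : R) (l : nat) :
  2 * (1 - cos x) * dirichlet x l = cos (INR l * x) - cos (INR (S l) * x).
Proof.
  unfold dirichlet; induction l as [|l IHl].
  - simpl; rewrite Rmult_0_l, Rmult_1_l, cos_0; field.
  - cbn [sum_f_R0]; rewrite Rmult_plus_distr_l, IHl; simpl (cos_weight (S l)).
    replace (INR (S (S l)) * x) with (INR (S l) * x + x) by (rewrite (S_INR (S l)); ring).
    replace (INR l * x) with (INR (S l) * x - x) by (rewrite (S_INR l); ring).
    rewrite cos_plus, cos_minus; ring.
Qed.

Lemma fejer_succ (x : R) (l : nat) : fejer x (S l) = fejer x l + dirichlet x (S l).
Proof.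
  unfold fejer, dirichlet; cbn [sum_f_R0].
  rewrite (sum_eq (fun j => cos_weight j * (INR (S l) + 1 - INR j) * cos (INR j * x))
             (fun j => cos_weight j * (INR l + 1 - INR j) * cos (INR j * x)
                       + cos_weight j * cos (INR j * x)))
    by (intros; rewrite S_INR; ring).
  rewrite sum_plus; ring.
Qed.

Lemma fejer_closed_form (x : R) (l : nat) :
  2 * (1 - cos x) * fejer x l = 1 - cos (INR (S l) * x).
Proof.
  induction l as [|l IHl].
  - unfold fejer; simpl; rewrite Rmult_0_l, cos_0, Rmult_1_l; field.
  - rewrite fejer_succ, Rmult_plus_distr_l, IHl, dirichlet_closed_form; ring.
Qed.

Lemma fejer_nonneg (x : R) (l : nat) : 0 < x < PI -> 0 <= fejer x l.
Proof.
  intros [Hx0 HxPI].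
  pose proof (sin_gt_0 x Hx0 HxPI) as Hsin.
  assert (Hcos : cos x < 1)
    by (pose proof (sin2_cos2 x); pose proof (COS_bound x); unfold Rsqr in *; nra).
  pose proof (COS_bound (INR (S l) * x)); pose proof (fejer_closed_form x l); nra.
Qed.

Definition cos_kernel (a x : R) (m : nat) : R :=
  sum_f_R0 (fun j => cos_weight j * gbinom a (m - j) * cos (INR j * x)) m.

Lemma cos_kernel_fejer_expansion (a x : R) (m : nat) :
  cos_kernel a x m = sum_f_R0 (fun l => gbinom (a - 2) (m - l) * fejer x l) m.
Proof.
  unfold fejer.
  rewrite (sum_eq _ (fun l => sum_f_R0 (fun j => gbinom (a - 2) (m - l)
                     * (cos_weight j * (INR l + 1 - INR j) * cos (INR j * x))) l))
    by (intros; rewrite scal_sum; apply sum_eq; intros; ring).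
  rewrite sum_f_R0_triangle_swap; unfold cos_kernel; apply sum_eq; intros j Hj.
  rewrite (sum_eq _ (fun t => gbinom (a - 2) t * (INR (m - j) + 1 - INR t)
                              * (cos_weight j * cos (INR j * x)))).
  - rewrite <- scal_sum, gbinom_conv_linear; ring.
  - intros t Ht; replace (m - (m - t))%nat with t by lia.
    rewrite (minus_INR m t), (minus_INR m j) by lia; ring.
Qed.

Lemma cos_kernel_nonneg (a x : R) (m : nat) :
  1 <= a -> 0 < x < PI -> 0 <= cos_kernel a x m.
Proof.
  intros Ha Hx; rewrite cos_kernel_fejer_expansion; apply cond_pos_sum; intros l.
  apply Rmult_le_pos; [apply gbinom_nonneg; lra | exact (fejer_nonneg x l Hx)].
Qed.

(* At [j = 0] the truncated [j - 1] is [0], so the formula holds uniformly. *)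
Lemma sin_mul_weighted_cos (x : R) (j : nat) :
  2 * sin x * (cos_weight j * cos (INR j * x)) =
  sin (INR (S j) * x) - sin (INR (j - 1) * x).
Proof.
  destruct j as [|k].
  - simpl; rewrite Rmult_0_l, cos_0, sin_0, Rmult_1_l; field.
  - simpl (cos_weight (S k)); replace (S k - 1)%nat with k by lia.
    replace (INR (S (S k)) * x) with (INR (S k) * x + x) by (rewrite (S_INR (S k)); ring).
    replace (INR k * x) with (INR (S k) * x - x) by (rewrite (S_INR k); ring).
    rewrite sin_plus, sin_minus; ring.
Qed.

Lemma S_na_succ (N : nat) (a x : R) :
  S_na (S N) a x = sum_f_R0 (fun i => gbinom a (N - i) * sin (INR (S i) * x)) N.
Proof.
  unfold S_na, sum_f; replace (S N - 1)%nat with N by lia.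
  apply sum_eq; intros i _; replace (i + 1)%nat with (S i) by lia; reflexivity.
Qed.

Lemma S_na_sub_cos_kernel (p : nat) (a x : R) :
  S_na (S (S (S p))) a x - S_na (S p) a x = 2 * sin x * cos_kernel a x (S (S p)).
Proof.
  rewrite !S_na_succ; unfold cos_kernel; rewrite scal_sum.
  rewrite (sum_eq (fun i => cos_weight i * gbinom a (S (S p) - i) * cos (INR i * x) * (2 * sin x))
                  (fun i => gbinom a (S (S p) - i) * sin (INR (S i) * x)
                            - gbinom a (S (S p) - i) * sin (INR (i - 1) * x))).
  2:{ intros i _.
       transitivity (gbinom a (S (S p) - i) * (2 * sin x * (cos_weight i * cos (INR i * x))));
         [ring | rewrite sin_mul_weighted_cos; ring]. }
  rewrite minus_sum.
  assert (Hshift : sum_f_R0 (fun i => gbinom a (S (S p) - i) * sin (INR (i - 1) * x)) (S (S p))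
                   = sum_f_R0 (fun i => gbinom a (p - i) * sin (INR (S i) * x)) p).
  { rewrite decomp_sum by lia; simpl Init.Nat.pred.
    rewrite decomp_sum by lia; simpl Init.Nat.pred.
    simpl (INR (0 - 1)); simpl (INR (1 - 1)); rewrite !Rmult_0_l, sin_0, !Rmult_0_r, !Rplus_0_l.
    apply sum_eq; intros i _; replace (S (S i) - 1)%nat with (S i) by lia; reflexivity. }
  rewrite Hshift; ring.
Qed.

Theorem lemma2p6 (n : nat) (a x : R) :
  (3 <= n)%nat -> 1 <= a -> 0 < x < PI ->
  S_na n a x >= S_na (n - 2) a x.
Proof.
  intros Hn Ha Hx.
  destruct n as [|[|[|p]]]; try lia.
  replace (S (S (S p)) - 2)%nat with (S p) by lia.
  pose proof (S_na_sub_cos_kernel p a x) as Hdiff.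
  pose proof (cos_kernel_nonneg a x (S (S p)) Ha Hx) as HK.
  pose proof (sin_gt_0 x (proj1 Hx) (proj2 Hx)) as Hsin.
  assert (0 <= 2 * sin x * cos_kernel a x (S (S p))) by (apply Rmult_le_pos; lra).
  lra.
Qed.
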